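(* For every $n\geq1$ and all $i,j\in I$ with $|i|<|j|$ we have $C^{(n)}_{ij}\cdot v=0$.
   Context: Let $N\geq1$, $I=\{-N,\dots,-1,1,\dots,N\}$, and for $k\in I$ put $\bar k=0$ if $k>0$, $\bar k=1$ if $k<0$. The Lie superalgebra $\mathfrak{q}(N)$ over $\mathbb{C}$ is spanned by elements $F_{ij}$ ($i,j\in I$) with $F_{-i,-j}=F_{ij}$ (realized as $F_{ij}=E_{ij}+E_{-i,-j}\in\mathfrak{gl}(N|N)$), $F_{ij}$ of parity $\bar\imath+\bar\jmath\bmod 2$, and supercommutator $$[F_{ij}, F_{kl}] = \delta_{kj} F_{il} - (-1)^{(\bar{\imath}+ \bar{\jmath})(\bar{k} + \bar{l})} \delta_{il} F_{kj} + \delta_{k,-j} F_{-i,l} - (-1)^{(\bar{\imath} + \bar{\jmath})(\bar{k} + \bar{l})} \delta_{-i,l} F_{k,-j}.$$ For $n\geq1$ define $C^{(n)}_{ij}\in U(\mathfrak{q}(N))$ by $$C^{(n)}_{ij} = \sum_{k_1,\ldots,k_{n-1}\in I}F_{ik_1} (-1)^{\bar{k}_1} F_{k_1k_2} (-1)^{\bar{k}_2} \cdots F_{k_{n-2}k_{n-1}} (-1)^{\bar{k}_{n-1}} F_{k_{n-1}j}$$ (so $C^{(1)}_{ij}=F_{ij}$). Let $V$ be a representation of $\mathfrak{q}(N)$ and $v\in V$ a vector such that $F_{ij}\cdot v=0$ whenever $|i|<|j|$, and $F_{ii}\cdot v=\lambda_i v$ for $i=1,\dots,N$, where $\lambda_1,\dots,\lambda_N\in\mathbb{C}$.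 *)

From HB Require Import structures.
From mathcomp Require Import all_boot all_order all_algebra.
Set Implicit Arguments. Unset Strict Implicit. Unset Printing Implicit Defensive.
Import Order.TTheory GRing.Theory Num.Theory.
Local Open Scope ring_scope.

Definition idxI (N : nat) : seq int :=
  [seq (Posz k.+1) | k <- iota 0 N] ++ [seq - (Posz k.+1) | k <- iota 0 N].

Definition kbar (k : int) : bool := k < 0.

Definition parF (i j : int) : bool := kbar i (+) kbar j.

Definition ssign (R : pzRingType) (i j k l : int) : R :=
  (-1) ^+ (parF i j && parF k l).

(* rho i j is the operator by which F_ij acts on V. *)
Definition is_qrep (R : pzRingType) (V : lmodType R) (N : nat)
    (rho : int -> int -> {linear V -> V}) : Prop :=
  (forall i j, i \in idxI N -> j \in idxI N -> rho (- i) (- j) =1 rho i j) /\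
  (forall i j k l, i \in idxI N -> j \in idxI N -> k \in idxI N -> l \in idxI N ->
     forall x : V,
       rho i j (rho k l x) - ssign R i j k l *: rho k l (rho i j x)
       = (k == j)%:R *: rho i l x
         - ssign R i j k l *: ((i == l)%:R *: rho k j x)
         + (k == - j)%:R *: rho (- i) l x
         - ssign R i j k l *: ((- i == l)%:R *: rho k (- j) x)).

(* Copn m i j is the action of C^{(m+1)}_{ij} on V:
   C^{(1)}_{ij} = F_ij,  C^{(m+1)}_{ij} = sum_k F_ik (-1)^{\bar k} C^{(m)}_{kj}. *)
Fixpoint Copn (R : pzRingType) (V : lmodType R) (N : nat)
    (rho : int -> int -> {linear V -> V}) (m : nat) (i j : int) (x : V) : V :=
  match m with
  | 0 => rho i j x
  | m'.+1 => \sum_(k <- idxI N) rho i k ((-1) ^+ kbar k *: Copn N rho m' k j x)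
  end.

Definition Cop (R : pzRingType) (V : lmodType R) (N : nat)
    (rho : int -> int -> {linear V -> V}) (n : nat) (i j : int) (x : V) : V :=
  Copn N rho n.-1 i j x.

From HB Require Import structures.
From mathcomp Require Import all_boot all_order all_algebra.
From mathcomp Require Import zify ring.
Import Order.TTheory GRing.Theory Num.Theory.
Local Open Scope ring_scope.

(* Call a family of operators T_cd (c, d in I) covariant if it
   satisfies, with respect to every F_ab, the same supercommutation relation
   as the family F_cd itself.  The recursion
      C^(m+1)_cd = sum_k F_ck (-1)^{\bar k} C^(m)_kd
   preserves covariance (a computation with the q(N) relations, done one
   summand at a time), so every C^(m) is covariant.
   For a covariant family T and a vector v with F_ik v = 0, T_kj 0 = 0 and
   j <> +-i, the relation for [F_ik, T_kj] collapses to F_ik T_kj v = T_ij v.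
   The theorem follows by induction on n: in C^(n+1)_ij v, the summands with
   |k| < |j| vanish by induction, and those with |k| >= |j| > |i| equal
   +-F_ik C^(n)_kj v = +-C^(n)_ij v, which vanishes by induction as well. *)

(* I has no repeated index, so a Kronecker delta summed over I picks one term. *)
Lemma idxI_uniq N : uniq (idxI N).
Proof.
rewrite /idxI cat_uniq !map_inj_uniq ?iota_uniq //=.
- rewrite andbT; apply/hasPn => x /mapP [k _ ->]; apply/mapP => -[k' _ /eqP]; lia.
- by move=> x y /eqP; rewrite eqr_opp => /eqP [->].
- by move=> x y [->].
Qed.

(* Indices are nonzero, so their parity changes under negation. *)
Lemma idxI_neq0 {N k} : k \in idxI N -> k != 0.
Proof. by rewrite mem_cat => /orP [] /mapP [j _ ->]; apply/eqP; lia. Qed.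

Lemma idxI_opp {N k} : k \in idxI N -> - k \in idxI N.
Proof.
rewrite !mem_cat => /orP [] /mapP [j Hj ->]; apply/orP.
  by right; apply/mapP; exists j.
by left; apply/mapP; exists j => //; rewrite opprK.
Qed.

Lemma kbarN k : k != 0 -> kbar (- k) = ~~ kbar k.
Proof. by move=> k0; rewrite /kbar oppr_lt0 ltNge le_eqVlt (negbTE k0). Qed.

Lemma idxI_neq_opp {N k} : k \in idxI N -> (k == - k) = false.
Proof.
move=> /idxI_neq0 k0; apply/negbTE; apply: contra k0 => /eqP kk.
by apply/eqP; lia.
Qed.

Lemma cancel_pairs (M : zmodType) (x1 y1 x2 y2 x3 x4 : M) :
  x1 - y1 + x2 - y2 + y1 - x3 + y2 - x4 = x1 - x3 + x2 - x4.
Proof.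
rewrite (addrAC _ (- y2) y1) (addrAC _ x2 y1) subrK.
by rewrite (addrAC _ (- x3) y2) subrK (addrAC x1 x2 (- x3)).
Qed.

Section Signs.
Variable R : pzRingType.

Local Notation e k := ((-1 : R) ^+ kbar k).

Lemma ssign_mul a b c k d : ssign R a b c k * ssign R a b k d = ssign R a b c d.
Proof.
rewrite /ssign /parF; case: (kbar a); case: (kbar b); case: (kbar c);
  case: (kbar k); case: (kbar d); by rewrite /= ?expr0 ?expr1 ?mulrNN ?mulr1 ?mul1r.
Qed.

Lemma ssign_e a b c a' b' : kbar a' (+) kbar b' = kbar a (+) kbar b ->
  ssign R a b c a' * e a' = ssign R a b c b' * e b'.
Proof.
rewrite /ssign /parF; case: (kbar a); case: (kbar b); case: (kbar c);
  case: (kbar a'); case: (kbar b'); by rewrite /= ?expr0 ?expr1 ?mulrNN ?mulr1 ?mul1r.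
Qed.

End Signs.

Section Covariance.
Variables (R : comNzRingType) (N : nat) (V : lmodType R)
  (rho : int -> int -> {linear V -> V}) (Hrep : is_qrep N rho).

Local Notation e k := ((-1 : R) ^+ kbar k).
Local Notation S := (ssign R).
Local Notation Cp := (Copn N rho).

Definition covariant (T : int -> int -> V -> V) : Prop :=
  forall a b c d x, a \in idxI N -> b \in idxI N -> c \in idxI N -> d \in idxI N ->
  rho a b (T c d x) - S a b c d *: T c d (rho a b x)
  = (c == b)%:R *: T a d x - S a b c d *: ((a == d)%:R *: T c b x)
    + (c == - b)%:R *: T (- a) d x
    - S a b c d *: ((- a == d)%:R *: T c (- b) x).

Definition Cstep (T : int -> int -> V -> V) (c d : int) (x : V) : V :=
  \sum_(k <- idxI N) rho c k (e k *: T k d x).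

Lemma sum_delta p (f : int -> V) : p \in idxI N ->
  \sum_(k <- idxI N) (k == p)%:R *: f k = f p.
Proof.
move=> Hp; rewrite (bigD1_seq p) //= ?idxI_uniq // eqxx scale1r big1 ?addr0 //.
by move=> k /negbTE ->; rewrite scale0r.
Qed.

Lemma covariant_rho : covariant (fun c d => rho c d).
Proof. by move=> a b c d x Ha Hb Hc Hd; exact: Hrep.2. Qed.

Section Step.
Variable T : int -> int -> V -> V.
Hypothesis HT : covariant T.

Lemma covariant_summand a b c d k x :
  a \in idxI N -> b \in idxI N -> c \in idxI N -> d \in idxI N -> k \in idxI N ->
  rho a b (rho c k (e k *: T k d x)) - S a b c d *: rho c k (e k *: T k d (rho a b x))
  = (c == b)%:R *: rho a k (e k *: T k d x)
  - (k == a)%:R *: (S a b c k *: rho c b (e k *: T k d x))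
  + (c == - b)%:R *: rho (- a) k (e k *: T k d x)
  - (k == - a)%:R *: (S a b c k *: rho c (- b) (e k *: T k d x))
  + (k == b)%:R *: (S a b c k *: rho c k (e k *: T a d x))
  - (a == d)%:R *: (S a b c d *: rho c k (e k *: T k b x))
  + (k == - b)%:R *: (S a b c k *: rho c k (e k *: T (- a) d x))
  - (- a == d)%:R *: (S a b c d *: rho c k (e k *: T k (- b) x)).
Proof.
move=> Ha Hb Hc Hd Hk.
have outer : rho a b (rho c k (e k *: T k d x)) =
    (c == b)%:R *: rho a k (e k *: T k d x)
    - S a b c k *: ((a == k)%:R *: rho c b (e k *: T k d x))
    + (c == - b)%:R *: rho (- a) k (e k *: T k d x)
    - S a b c k *: ((- a == k)%:R *: rho c (- b) (e k *: T k d x))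
    + S a b c k *: rho c k (rho a b (e k *: T k d x)).
  by apply/eqP; rewrite -subr_eq; apply/eqP; exact: Hrep.2.
have inner : rho a b (T k d x) =
    (k == b)%:R *: T a d x - S a b k d *: ((a == d)%:R *: T k b x)
    + (k == - b)%:R *: T (- a) d x - S a b k d *: ((- a == d)%:R *: T k (- b) x)
    + S a b k d *: T k d (rho a b x).
  by apply/eqP; rewrite -subr_eq; apply/eqP; exact: HT.
rewrite outer [rho a b (_ *: _)]linearZ /= inner.
set W := T k d (rho a b x).
have signs : S a b c k *: rho c k (e k *: (S a b k d *: W))
           = S a b c d *: rho c k (e k *: W).
  by rewrite scalerA mulrC -scalerA linearZ /= scalerA ssign_mul.
rewrite scalerDr linearD scalerDr signs addrA addrK.
rewrite ?linearD ?linearN ?linearZ /= ?scalerDr ?scalerN ?scalerA.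
rewrite ?linearD ?linearN ?linearZ /= ?scalerDr ?scalerN ?scalerA.
(* Both sides are now the same eight vectors; compare coefficients. *)
rewrite !addrA; do ![congr (_ + _) | congr (- _) | congr (_ *: _)];
  rewrite ?(eq_sym a k) ?(eq_sym (- a) k) -?(ssign_mul R a b c k d);
  move: ((-1 : R) ^+ kbar k) => t; ring.
Qed.

Lemma covariant_Cstep : covariant (Cstep T).
Proof.
move=> a b c d x Ha Hb Hc Hd; rewrite /Cstep.
have Hna : - a \in idxI N by apply: idxI_opp.
have Hnb : - b \in idxI N by apply: idxI_opp.
rewrite linear_sum scaler_sumr -sumrB.
rewrite (eq_big_seq _ (fun k => covariant_summand a b c d k x Ha Hb Hc Hd)).
rewrite !big_split /= !sumrN !sum_delta // -!scaler_sumr.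
have shift_a : S a b c a *: rho c b (e a *: T a d x)
             = S a b c b *: rho c b (e b *: T a d x).
  by rewrite !linearZ /= !scalerA mulrC (@ssign_e R a b c a b) // mulrC.
have shift_na : S a b c (- a) *: rho c (- b) (e (- a) *: T (- a) d x)
              = S a b c (- b) *: rho c (- b) (e (- b) *: T (- a) d x).
  rewrite !linearZ /= !scalerA mulrC (@ssign_e R a b c (- a) (- b)); first by rewrite mulrC.
  by rewrite !kbarN ?(idxI_neq0 Ha) ?(idxI_neq0 Hb) // addbN addNb negbK.
have swap (s t : R) (y : V) : s *: (t *: y) = t *: (s *: y).
  by rewrite !scalerA mulrC.
rewrite shift_a shift_na [in RHS](swap (S a b c d)) [in RHS](swap (S a b c d)).
exact: cancel_pairs.
Qed.

End Step.

Lemma covariant_Copn m : covariant (Cp m).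
Proof.
elim: m => [|m IH]; first exact: covariant_rho.
exact: (covariant_Cstep (Cp m) IH).
Qed.

Lemma covariant_raise {T : int -> int -> V -> V} {i k j : int} {v : V} :
  covariant T -> i \in idxI N -> k \in idxI N -> j \in idxI N ->
  T k j 0 = 0 -> rho i k v = 0 -> i != j -> - i != j ->
  rho i k (T k j v) = T i j v.
Proof.
move=> HT Hi Hk Hj T0 Fv0 nij nnij.
have := HT i k k j v Hi Hk Hk Hj.
rewrite Fv0 T0 scaler0 subr0 eqxx (idxI_neq_opp Hk) (negbTE nij) (negbTE nnij).
by rewrite !(scale0r, scaler0, subr0, addr0, scale1r).
Qed.

(* C^(m+1)_cd 0 = 0, needed to drop the term C^(m+1)_kj (F_ik v). *)
Lemma Copn0 m c d : Cp m c d 0 = 0.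
Proof.
elim: m c => [|m IH] c /=; first by rewrite linear0.
by rewrite big1 // => k _; rewrite IH scaler0 linear0.
Qed.

Lemma Copn_highest_weight v m i j :
  (forall i j, i \in idxI N -> j \in idxI N -> (`|i| < `|j|)%N -> rho i j v = 0) ->
  i \in idxI N -> j \in idxI N -> (`|i| < `|j|)%N -> Cp m i j v = 0.
Proof.
move=> Hhw; elim: m i j => [|m IH] i j Hi Hj Hij /=; first exact: Hhw.
rewrite big1_seq // => k /andP [_ Hk].
have [Hkj|Hjk] := ltnP `|k| `|j|; first by rewrite IH // scaler0 linear0.
have Hik : (`|i| < `|k|)%N by exact: leq_trans Hij Hjk.
have nij : i != j by apply: contraTneq Hij => ->; rewrite ltnn.
have nnij : - i != j by apply: contraTneq Hij => <-; rewrite abszN ltnn.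
have raised := covariant_raise (covariant_Copn m) Hi Hk Hj (Copn0 m k j)
  (Hhw i k Hi Hk Hik) nij nnij.
by rewrite linearZ /= raised IH // scaler0.
Qed.

End Covariance.

Theorem mainTheorem4 (C : numClosedFieldType) (N : nat) (HN : (1 <= N)%N)
    (V : lmodType C) (rho : int -> int -> {linear V -> V})
    (Hrep : is_qrep N rho) (v : V) (lambda : nat -> C)
    (Hhw : forall i j, i \in idxI N -> j \in idxI N ->
             (`|i| < `|j|)%N -> rho i j v = 0)
    (Hwt : forall i : nat, (1 <= i <= N)%N ->
             rho (Posz i) (Posz i) v = lambda i *: v) :
  forall n : nat, (1 <= n)%N ->
  forall i j, i \in idxI N -> j \in idxI N -> (`|i| < `|j|)%N ->
    Cop N rho n i j v = 0.
Proof.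
move=> n _ i j Hi Hj Hij.
exact: (@Copn_highest_weight C N V rho Hrep v n.-1 i j Hhw Hi Hj Hij).
Qed.
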